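(* Let $(A,\succ_A,\prec_A)$ be an anti-pre-Leibniz algebra with sub-adjacent Leibniz algebra $(A,\circ_A)$. Define multiplications on $A\oplus A^*$ by $$(x+a^* )\circ_{1}(y+b^* )=x\circ_A y-\mathcal L^*_{\succ_A}(x)b^*+(\mathcal L^*_{\succ_A}+\mathcal R^*_{\prec_A})(y)a^*,$$ $$(x+a^* )\circ_{2}(y+b^* )=x\circ_A y+\mathcal L^*_{\circ_A}(x)b^*-(\mathcal L^*_{\circ_A}+\mathcal R^*_{\circ_A})(y)a^*,$$ for $x,y\in A$, $a^*,b^*\in A^*$. Then $(A\oplus A^*,\circ_1,\circ_2)$ is a compatible Leibniz algebra if and only if $(A,\succ_A,\prec_A)$ is an admissible Novikov dialgebra.
   Context: All vector spaces are finite-dimensional over a field $\mathbb K$ of characteristic zero. For a multiplication $\ast$, $\mathcal L_\ast(x)y=x\ast y$, $\mathcal R_\ast(x)y=y\ast x$; for $f:A\to\mathrm{End}(V)$, $f^*:A\to\mathrm{End}(V^* )$ is $\langle f^*(x)u^*,v\rangle=-\langle u^*,f(x)v\rangle$. A Leibniz algebra is a vector space with multiplication $\circ$ satisfying $x\circ(y\circ z)=(x\circ y)\circ z+y\circ(x\circ z)$. A compatible Leibniz algebra is $(B,\circ_1,\circ_2)$ with both $(B,\circ_1),(B,\circ_2)$ Leibniz algebras and, for all $x,y,z$: $x\circ_2(y\circ_1 z)+x\circ_1(y\circ_2 z)-(x\circ_1 y)\circ_2 z-(x\circ_2 y)\circ_1 z-y\circ_2(x\circ_1 z)-y\circ_1(x\circ_2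 z)=0$. For multiplications $\succ_A,\prec_A$ set $x\circ_A y=x\succ_A y+x\prec_A y$. Identities for all $x,y,z$: (AL1) $(x\circ_A y)\prec_A z=x\succ_A(y\circ_A z)-y\succ_A(x\circ_A z)$; (AL2) $(x\circ_A y)\succ_A z=y\succ_A(x\succ_A z)-x\succ_A(y\succ_A z)$; (AL3) $x\prec_A(y\circ_A z)=(y\succ_A x)\prec_A z-y\succ_A(x\prec_A z)$; (AL4) $(x\succ_A y)\prec_A z=-(y\prec_A x)\prec_A z$; (AN1) $(x\succ_A y)\succ_A z=-(y\prec_A x)\succ_A z$; (AN2) $x\prec_A(y\prec_A z)-y\prec_A(x\prec_A z)=2(x\prec_A y)\prec_A z-2(y\prec_A x)\prec_A z$; (AN3) $(x\succ_A y)\succ_A z+y\prec_A(x\succ_A z)=2x\succ_A(y\circ_A z)$. An anti-pre-Leibniz algebra satisfies (AL1)–(AL4), and its sub-adjacent Leibniz algebra is $(A,\circ_A)$; an admissible Novikov dialgebra satisfies (AL2)–(AL4) and (AN1)–(AN3). *)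

From HB Require Import structures.
From mathcomp Require Import all_boot all_order all_algebra.
Set Implicit Arguments. Unset Strict Implicit. Unset Printing Implicit Defensive.
Import GRing.Theory.
Local Open Scope ring_scope.

Section AntiPreLeibniz.
Variables (K : fieldType) (A : vectType K).

Definition bilinear_mul (m : A -> A -> A) : Prop :=
  (forall x, linear (m x)) /\ (forall y, linear (fun x => m x y)).

Definition circA (succ prec : A -> A -> A) (x y : A) : A := succ x y + prec x y.

Definition AL1 (succ prec : A -> A -> A) : Prop := forall x y z,
  prec (circA succ prec x y) z = succ x (circA succ prec y z) - succ y (circA succ prec x z).
Definition AL2 (succ prec : A -> A -> A) : Prop := forall x y z,
  succ (circA succ prec x y) z = succ y (succ x z) - succ x (succ y z).
Definition AL3 (succ prec : A -> A -> A) : Prop := forall x y z,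
  prec x (circA succ prec y z) = prec (succ y x) z - succ y (prec x z).
Definition AL4 (succ prec : A -> A -> A) : Prop := forall x y z,
  prec (succ x y) z = - prec (prec y x) z.
Definition AN1 (succ prec : A -> A -> A) : Prop := forall x y z,
  succ (succ x y) z = - succ (prec y x) z.
Definition AN2 (succ prec : A -> A -> A) : Prop := forall x y z,
  prec x (prec y z) - prec y (prec x z) = 2%:R *: prec (prec x y) z - 2%:R *: prec (prec y x) z.
Definition AN3 (succ prec : A -> A -> A) : Prop := forall x y z,
  succ (succ x y) z + prec y (succ x z) = 2%:R *: succ x (circA succ prec y z).

Definition anti_pre_Leibniz (succ prec : A -> A -> A) : Prop :=
  bilinear_mul succ /\ bilinear_mul prec /\
  [/\ AL1 succ prec, AL2 succ prec, AL3 succ prec & AL4 succ prec].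

Definition admissible_Novikov_dialgebra (succ prec : A -> A -> A) : Prop :=
  bilinear_mul succ /\ bilinear_mul prec /\
  [/\ AL2 succ prec, AL3 succ prec & AL4 succ prec] /\
  [/\ AN1 succ prec, AN2 succ prec & AN3 succ prec].

(* The space A (+) A^*: pairs (x, a) with a a linear functional A -> K.
   We use the carrier A * (A -> K) and restrict all quantifications to
   pairs whose second component is linear (in_dbl). *)
Definition dbl := (A * (A -> K))%type.
Definition in_dbl (X : dbl) : Prop := scalar X.2.
Definition dzero : dbl := (0, fun _ => 0).
Definition dadd (X Y : dbl) : dbl := (X.1 + Y.1, fun v => X.2 v + Y.2 v).
Definition dopp (X : dbl) : dbl := (- X.1, fun v => - X.2 v).

(* Dual maps: for f : A -> End(A) given by f x = (v |-> m x v) (left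
   multiplication L_m) resp. (v |-> m v x) (right multiplication R_m),
   <f^*(x) a, v> = - <a, f(x) v>. *)
Definition dualL (m : A -> A -> A) (x : A) (a : A -> K) : A -> K :=
  fun v => - a (m x v).
Definition dualR (m : A -> A -> A) (y : A) (a : A -> K) : A -> K :=
  fun v => - a (m v y).

Definition circ1 (succ prec : A -> A -> A) (X Y : dbl) : dbl :=
  (circA succ prec X.1 Y.1,
   fun v => - dualL succ X.1 Y.2 v + (dualL succ Y.1 X.2 v + dualR prec Y.1 X.2 v)).

Definition circ2 (succ prec : A -> A -> A) (X Y : dbl) : dbl :=
  (circA succ prec X.1 Y.1,
   fun v => dualL (circA succ prec) X.1 Y.2 v
            - (dualL (circA succ prec) Y.1 X.2 v + dualR (circA succ prec) Y.1 X.2 v)).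

Definition dbl_Leibniz (m : dbl -> dbl -> dbl) : Prop :=
  forall X Y Z, in_dbl X -> in_dbl Y -> in_dbl Z ->
    m X (m Y Z) = dadd (m (m X Y) Z) (m Y (m X Z)).

Definition dbl_compatible_Leibniz (m1 m2 : dbl -> dbl -> dbl) : Prop :=
  [/\ dbl_Leibniz m1, dbl_Leibniz m2 &
    forall X Y Z, in_dbl X -> in_dbl Y -> in_dbl Z ->
      dadd (dadd (dadd (dadd (dadd (m2 X (m1 Y Z)) (m1 X (m2 Y Z)))
                              (dopp (m2 (m1 X Y) Z)))
                        (dopp (m1 (m2 X Y) Z)))
                  (dopp (m2 Y (m1 X Z))))
           (dopp (m1 Y (m2 X Z))) = dzero].

End AntiPreLeibniz.

From HB Require Import structures.
From mathcomp Require Import all_boot all_order all_algebra.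
From mathcomp Require Import ring.
From Stdlib Require Import FunctionalExtensionality.
Import GRing.Theory.
Set Implicit Arguments. Unset Strict Implicit.
Local Open Scope ring_scope.

(* Both products are dual semidirect products
   (x + a) * (y + b) = x o y + l^*(x) b + r^*(y) a over the sub-adjacent
   Leibniz algebra (A, o): o_1 for (l, r) = (-L_succ, L_succ + R_prec) and
   o_2 for the coregular pair (L_o, -L_o - R_o).  Evaluated on A (+) A^*, the
   Leibniz and compatibility identities split into one vector identity on A for
   each of the three functionals involved.  The anti-pre-Leibniz identities make
   o a Leibniz product and both pairs representations, so only the three cross
   terms of the compatibility identity remain.  Modulo (AL1)-(AL4) the first is
   -AN2(x,y,v), the second is AN3(x,v,y) plus a difference of first ones, and
   the third is the second minus AN1(y,v,x); so they all vanish exactly when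
   (AN1)-(AN3) hold.  Each reduction modulo (AL1)-(AL4) is an explicit integer
   combination of instances (found by linear algebra in the free algebra with
   two bilinear products), so no assumption on the characteristic is needed. *)

Section LinearFacts.
Variables (K : fieldType) (A : vectType K).

Definition linear_of (f : A -> A) (hf : linear f) : {linear A -> A} :=
  HB.pack f (GRing.isLinear.Build K A A *:%R f hf).

Definition scalar_of (c : A -> K) (hc : scalar c) : {scalar A} :=
  HB.pack c (GRing.isLinear.Build K A K *%R c hc).

Lemma scalar_const0 : scalar (fun _ : A => 0 : K).
Proof. by move=> k u w; rewrite mulr0 addr0. Qed.

Lemma eq_of_scalar_eq (u w : A) : (forall c : {scalar A}, c u = c w) -> u = w.
Proof.
move=> eq_uw; apply/eqP; rewrite -subr_eq0; apply/eqP.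
rewrite (coord_vbasis (memvf (u - w))) big1 // => i _.
have coordL : scalar (coord (vbasis fullv) i : A -> K) by exact: linearP.
by have /= eq_i := eq_uw (scalar_of coordL); rewrite linearB /= eq_i subrr scale0r.
Qed.

Lemma scalar_funD (c : A -> K) : scalar c -> {morph c : u w / u + w}.
Proof. by move=> hc; exact: raddfD (scalar_of hc). Qed.
Lemma scalar_funN (c : A -> K) : scalar c -> {morph c : u / - u}.
Proof. by move=> hc; exact: raddfN (scalar_of hc). Qed.

Lemma scalar_funZ (c : A -> K) : scalar c -> forall k u, c (k *: u) = k * c u.
Proof. by move=> hc; exact: scalarZ (scalar_of hc). Qed.
Lemma scalar_fun0 (c : A -> K) : scalar c -> c 0 = 0.
Proof. by move=> hc; exact: raddf0 (scalar_of hc). Qed.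

End LinearFacts.

Lemma eq_modulo (V : zmodType) (k : int) (u w l r : V) :
  u = w -> l = r + (u - w) *~ k -> l = r.
Proof. by move=> -> ->; rewrite subrr mul0rz addr0. Qed.
Arguments eq_modulo {V} k {u w l r}.

(* Vectors are equal when all linear functionals agree on them, and [ring]
   normalizes the images, pushing the functional through sums and integer
   multiples; scalings by numerals are first turned into such multiples. *)
Ltac linear_ring := rewrite ?scaler_nat; apply: eq_of_scalar_eq => ?; ring.

Section Bilinear.
Variables (K : fieldType) (A : vectType K) (m : A -> A -> A).
Hypothesis hm : bilinear_mul m.

Lemma bilinDr x : {morph m x : u w / u + w}.
Proof. exact: raddfD (linear_of (hm.1 x)). Qed.
Lemma bilinDl y : {morph m^~ y : u w / u + w}.
Proof. exact: raddfD (linear_of (hm.2 y)). Qed.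
Lemma bilinNr x : {morph m x : u / - u}.
Proof. exact: raddfN (linear_of (hm.1 x)). Qed.
Lemma bilinNl y : {morph m^~ y : u / - u}.
Proof. exact: raddfN (linear_of (hm.2 y)). Qed.

End Bilinear.

Section BilinearClosure.
Variables (K : fieldType) (A : vectType K).
Implicit Types m : A -> A -> A.

Lemma bilinear_mulD m1 m2 :
  bilinear_mul m1 -> bilinear_mul m2 -> bilinear_mul (fun x y => m1 x y + m2 x y).
Proof.
by move=> [h1l h1r] [h2l h2r]; split=> x k u w;
  rewrite ?(h1l x, h2l x, h1r x, h2r x); linear_ring.
Qed.

Lemma bilinear_mulN m : bilinear_mul m -> bilinear_mul (fun x y => - m x y).
Proof. by move=> [hl hr]; split=> x k u w; rewrite ?(hl x, hr x); linear_ring. Qed.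

Lemma bilinear_mul_swap m : bilinear_mul m -> bilinear_mul (fun x y => m y x).
Proof. by move=> [hl hr]; split. Qed.

End BilinearClosure.

Section DoubleSpace.
Variables (K : fieldType) (A : vectType K).
Implicit Types (X Y Z : dbl A) (M N Mo No Mi Ni : dbl A -> dbl A -> dbl A).

Lemma dbl_eq X Y : X.1 = Y.1 -> X.2 =1 Y.2 -> X = Y.
Proof. by case: X Y => [x a] [y b] /= -> /functional_extensionality ->. Qed.

Definition dbl_agree M N :=
  forall X Y, in_dbl X -> in_dbl Y -> M X Y = N X Y.
Definition dbl_closed N :=
  forall X Y, in_dbl X -> in_dbl Y -> in_dbl (N X Y).

Lemma dbl_agree2 Mo No Mi Ni X Y Z : dbl_agree Mo No -> dbl_agree Mi Ni ->
  dbl_closed Ni -> in_dbl X -> in_dbl Y -> in_dbl Z ->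
  Mo X (Mi Y Z) = No X (Ni Y Z) /\ Mo (Mi X Y) Z = No (Ni X Y) Z.
Proof.
move=> Eo Ei Ci hX hY hZ; have := Ci X Y hX hY; have := Ci Y Z hY hZ.
by rewrite (Ei Y) // (Ei X) // => hYZ hXY; rewrite !Eo.
Qed.

Lemma dbl_Leibniz_agree M N :
  dbl_agree M N -> dbl_closed N -> dbl_Leibniz M <-> dbl_Leibniz N.
Proof.
move=> E C; split=> hL X Y Z hX hY hZ; have := hL X Y Z hX hY hZ;
  by have [-> ->] := dbl_agree2 E E C hX hY hZ; have [-> _] := dbl_agree2 E E C hY hX hZ.
Qed.

Definition dbl_compat_defect M1 M2 X Y Z :=
  dadd (dadd (dadd (dadd (dadd (M2 X (M1 Y Z)) (M1 X (M2 Y Z)))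
                         (dopp (M2 (M1 X Y) Z)))
                   (dopp (M1 (M2 X Y) Z)))
             (dopp (M2 Y (M1 X Z))))
       (dopp (M1 Y (M2 X Z))).

Lemma dbl_compatible_agree M1 N1 M2 N2 : dbl_agree M1 N1 -> dbl_agree M2 N2 ->
  dbl_closed N1 -> dbl_closed N2 ->
  dbl_compatible_Leibniz M1 M2 <-> dbl_compatible_Leibniz N1 N2.
Proof.
move=> E1 E2 C1 C2.
have [L1 L2] := (dbl_Leibniz_agree E1 C1, dbl_Leibniz_agree E2 C2).
have D X Y Z : in_dbl X -> in_dbl Y -> in_dbl Z ->
    dbl_compat_defect M1 M2 X Y Z = dbl_compat_defect N1 N2 X Y Z.
  move=> hX hY hZ; rewrite /dbl_compat_defect.
  have [-> ->] := dbl_agree2 E2 E1 C1 hX hY hZ.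
  have [-> ->] := dbl_agree2 E1 E2 C2 hX hY hZ.
  have [-> _] := dbl_agree2 E2 E1 C1 hY hX hZ.
  by have [-> _] := dbl_agree2 E1 E2 C2 hY hX hZ.
split=> -[h1 h2 h3]; split; try by [apply/L1 | apply/L2].
- by move=> X Y Z hX hY hZ; rewrite -[LHS]/(dbl_compat_defect N1 N2 X Y Z) -D //; apply: h3.
- by move=> X Y Z hX hY hZ; rewrite -[LHS]/(dbl_compat_defect M1 M2 X Y Z) D //; apply: h3.
Qed.

End DoubleSpace.

Section DualSemidirect.
Variables (K : fieldType) (A : vectType K).
Implicit Types (m l r li ri lo ro : A -> A -> A) (X Y Z : dbl A).

Definition leibniz m := forall x y z, m x (m y z) = m (m x y) z + m y (m x z).

Definition dual_semidirect m l r X Y : dbl A :=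
  (m X.1 Y.1, fun v => - Y.2 (l X.1 v) - X.2 (r Y.1 v)).

Definition defect_ll m li lo x y v := lo (m x y) v - (li x (lo y v) - li y (lo x v)).
Definition defect_lr m li ri lo ro x z v :=
  ro (m x z) v - (li x (ro z v) - ri z (lo x v)).
Definition defect_rr m ri lo ro y z v := ro (m y z) v + ri y (ro z v) + ri z (lo y v).

Definition dual_representation m l r :=
  [/\ forall x y v, defect_ll m l l x y v = 0,
      forall x z v, defect_lr m l r l r x z v = 0
    & forall y z v, defect_rr m r l r y z v = 0].

Definition cross_ll m l1 l2 x y v := defect_ll m l1 l2 x y v + defect_ll m l2 l1 x y v.
Definition cross_lr m l1 r1 l2 r2 x z v :=
  defect_lr m l1 r1 l2 r2 x z v + defect_lr m l2 r2 l1 r1 x z v.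
Definition cross_rr m l1 r1 l2 r2 y z v :=
  defect_rr m r1 l2 r2 y z v + defect_rr m r2 l1 r1 y z v.

Definition dual_compatible m l1 r1 l2 r2 :=
  [/\ forall x y v, cross_ll m l1 l2 x y v = 0,
      forall x z v, cross_lr m l1 r1 l2 r2 x z v = 0
    & forall y z v, cross_rr m l1 r1 l2 r2 y z v = 0].

Definition leibniz_defect (mo mi : dbl A -> dbl A -> dbl A) X Y Z v :=
  (mo X (mi Y Z)).2 v - (mo (mi X Y) Z).2 v - (mo Y (mi X Z)).2 v.

Lemma leibniz_defect_dual_semidirect m li ri lo ro X Y Z v :
  in_dbl X -> in_dbl Y -> in_dbl Z ->
  leibniz_defect (dual_semidirect m lo ro) (dual_semidirect m li ri) X Y Z v =
    Z.2 (defect_ll m li lo X.1 Y.1 v) + Y.2 (defect_lr m li ri lo ro X.1 Z.1 v)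
    - X.2 (defect_rr m ri lo ro Y.1 Z.1 v).
Proof.
case: X Y Z => [x a] [y b] [z c]; rewrite /in_dbl /= => ha hb hc.
rewrite /leibniz_defect /defect_ll /defect_lr /defect_rr /=.
by rewrite !(scalar_funD ha, scalar_funN ha, scalar_funD hb, scalar_funN hb,
  scalar_funD hc, scalar_funN hc); ring.
Qed.

Lemma in_dbl_dual_semidirect m l r X Y : bilinear_mul l -> bilinear_mul r ->
  in_dbl X -> in_dbl Y -> in_dbl (dual_semidirect m l r X Y).
Proof.
case: X Y => [x a] [y b] [hl _] [hr _]; rewrite /in_dbl /= => ha hb k u w.
rewrite (hl x) (hr y) !(scalar_funD ha, scalar_funN ha, scalar_funZ ha, scalar_funD hb,
  scalar_funN hb, scalar_funZ hb).
ring.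
Qed.

Lemma dual_semidirect_leibniz m l r :
  leibniz m -> dual_representation m l r -> dbl_Leibniz (dual_semidirect m l r).
Proof.
move=> hm [hll hlr hrr] X Y Z hX hY hZ; apply: dbl_eq; first exact: hm.
move=> v; have := leibniz_defect_dual_semidirect m l r l r v hX hY hZ.
rewrite /leibniz_defect hll hlr hrr !scalar_fun0 // => J.
by apply: (eq_modulo 1 J); rewrite /=; ring.
Qed.

Lemma dbl_compat_defect_dual_semidirect m l1 r1 l2 r2 X Y Z v :
  in_dbl X -> in_dbl Y -> in_dbl Z ->
  (dbl_compat_defect (dual_semidirect m l1 r1) (dual_semidirect m l2 r2) X Y Z).2 v =
    Z.2 (cross_ll m l1 l2 X.1 Y.1 v) + Y.2 (cross_lr m l1 r1 l2 r2 X.1 Z.1 v)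
    - X.2 (cross_rr m l1 r1 l2 r2 Y.1 Z.1 v).
Proof.
move=> hX hY hZ.
have J12 := leibniz_defect_dual_semidirect m l1 r1 l2 r2 v hX hY hZ.
have J21 := leibniz_defect_dual_semidirect m l2 r2 l1 r1 v hX hY hZ.
move: J12 J21; rewrite /leibniz_defect => J12 J21.
apply: (eq_modulo 1 J21); apply: (eq_modulo 1 J12).
by rewrite !(scalar_funD hX, scalar_funD hY, scalar_funD hZ) /=; ring.
Qed.

Lemma dual_semidirect_compatible m l1 r1 l2 r2 : leibniz m ->
  dual_representation m l1 r1 -> dual_representation m l2 r2 ->
  dbl_compatible_Leibniz (dual_semidirect m l1 r1) (dual_semidirect m l2 r2) <->
  dual_compatible m l1 r1 l2 r2.
Proof.
move=> hm rep1 rep2.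
have dual := dbl_compat_defect_dual_semidirect m l1 r1 l2 r2.
split=> [[_ _ hC] | [hll hlr hrr]].
  have hC2 X Y Z v : in_dbl X -> in_dbl Y -> in_dbl Z ->
      Z.2 (cross_ll m l1 l2 X.1 Y.1 v) + Y.2 (cross_lr m l1 r1 l2 r2 X.1 Z.1 v)
      - X.2 (cross_rr m l1 r1 l2 r2 Y.1 Z.1 v) = 0.
    move=> hX hY hZ; rewrite -dual //.
    exact: (congr1 (fun W : dbl A => W.2 v) (hC X Y Z hX hY hZ)).
  have h0 := @scalar_const0 K A.
  split=> x y v; apply: eq_of_scalar_eq => c; rewrite raddf0.
  - by have /= := hC2 (x, _) (y, _) (x, _) v h0 h0 (linearP c); rewrite subr0 addr0.
  - by have /= := hC2 (x, _) (x, _) (y, _) v h0 (linearP c) h0; rewrite subr0 add0r.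
  - have /= := hC2 (x, _) (x, _) (y, _) v (linearP c) h0 h0.
    by rewrite add0r sub0r => /eqP; rewrite oppr_eq0 => /eqP.
split; [exact: dual_semidirect_leibniz | exact: dual_semidirect_leibniz |].
move=> X Y Z hX hY hZ; apply: dbl_eq => [|v]; first by rewrite /= [m X.1 _]hm; linear_ring.
by rewrite dual // hll hlr hrr !scalar_fun0 // subr0 addr0.
Qed.

End DualSemidirect.

Section Coregular.
Variables (K : fieldType) (A : vectType K) (m : A -> A -> A).
Hypotheses (hm : bilinear_mul m) (hL : leibniz m).

Lemma coregular_representation :
  dual_representation m m (fun y v => - (m y v + m v y)).
Proof.
have expand := (bilinDr hm, bilinDl hm, bilinNr hm, bilinNl hm).
split=> x y v; rewrite /defect_ll /defect_lr /defect_rr.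
- by apply: (eq_modulo (-1) (hL x y v)); rewrite ?expand; linear_ring.
- apply: (eq_modulo 1 (hL x y v)); apply: (eq_modulo 1 (hL x v y)).
  by rewrite ?expand; linear_ring.
- apply: (eq_modulo 1 (hL x y v)); apply: (eq_modulo 1 (hL x v y)).
  apply: (eq_modulo (-1) (hL y v x)); apply: (eq_modulo (-1) (hL v y x)).
  by rewrite ?expand; linear_ring.
Qed.

End Coregular.

Section AntiPreLeibniz.
Variables (K : fieldType) (A : vectType K) (s p : A -> A -> A).
Hypotheses (hs : bilinear_mul s) (hp : bilinear_mul p).
Hypotheses (al1 : AL1 s p) (al2 : AL2 s p) (al3 : AL3 s p) (al4 : AL4 s p).

Local Notation o := (circA s p).
Local Notation l1 := (fun x v => - s x v).
Local Notation r1 := (fun y v => s y v + p v y).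
Local Notation r2 := (fun y v => - (o y v + o v y)).

Let expand := (bilinDr hs, bilinDl hs, bilinNr hs, bilinNl hs,
               bilinDr hp, bilinDl hp, bilinNr hp, bilinNl hp).

Lemma bilinear_circA : bilinear_mul o.
Proof. exact: bilinear_mulD. Qed.

Lemma leibniz_circA : leibniz o.
Proof.
move=> x y z.
apply: (eq_modulo (-2) (al1 x y z)); apply: (eq_modulo (-1) (al2 x y z)).
apply: (eq_modulo 1 (al3 x y z)); apply: (eq_modulo (-1) (al3 y x z)).
apply: (eq_modulo 1 (al4 y x z)).
by rewrite /circA ?expand; linear_ring.
Qed.

Lemma anti_pre_Leibniz_dual_representation : dual_representation o l1 r1.
Proof.
split=> x y v; rewrite /defect_ll /defect_lr /defect_rr.
- by apply: (eq_modulo (-1) (al2 x y v)); rewrite /circA ?expand; linear_ring.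
- apply: (eq_modulo 1 (al2 x y v)); apply: (eq_modulo 1 (al3 v x y)).
  by rewrite /circA ?expand; linear_ring.
- apply: (eq_modulo 1 (al2 x y v)); apply: (eq_modulo 1 (al3 v x y)).
  apply: (eq_modulo 1 (al4 y v x)).
  by rewrite /circA ?expand; linear_ring.
Qed.

Lemma circ1E : dbl_agree (circ1 s p) (dual_semidirect o l1 r1).
Proof.
move=> [x a] [y b]; rewrite /in_dbl /= => ha hb; apply: dbl_eq => //= v.
by rewrite /dualL /dualR !(scalar_funD ha, scalar_funN ha, scalar_funN hb) opprK; ring.
Qed.

Lemma circ2E : dbl_agree (circ2 s p) (dual_semidirect o o r2).
Proof.
move=> [x a] [y b]; rewrite /in_dbl /= => ha hb; apply: dbl_eq => //= v.
by rewrite /dualL /dualR !(scalar_funD ha, scalar_funN ha, scalar_funN hb); ring.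
Qed.

Lemma dbl_closed_circ1 : dbl_closed (dual_semidirect o l1 r1).
Proof.
move=> X Y; apply: in_dbl_dual_semidirect; first exact: bilinear_mulN.
exact/bilinear_mulD/bilinear_mul_swap.
Qed.

Lemma dbl_closed_circ2 : dbl_closed (dual_semidirect o o r2).
Proof.
move=> X Y; apply: in_dbl_dual_semidirect; first exact: bilinear_circA.
exact/bilinear_mulN/bilinear_mulD/bilinear_mul_swap/bilinear_circA/bilinear_circA.
Qed.

Definition AN1_defect x y z := s (s x y) z + s (p y x) z.
Definition AN2_defect x y z :=
  p x (p y z) - p y (p x z) - (2%:R *: p (p x y) z - 2%:R *: p (p y x) z).
Definition AN3_defect x y z := s (s x y) z + p y (s x z) - 2%:R *: s x (o y z).

Lemma AN1_defect_eq0 : AN1 s p <-> forall x y z, AN1_defect x y z = 0.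
Proof.
split=> h x y z; first by rewrite /AN1_defect h addNr.
by apply/eqP; rewrite -addr_eq0; apply/eqP/h.
Qed.

Lemma AN2_defect_eq0 : AN2 s p <-> forall x y z, AN2_defect x y z = 0.
Proof. by split=> h x y z; [rewrite /AN2_defect h subrr | apply/subr0_eq/h]. Qed.

Lemma AN3_defect_eq0 : AN3 s p <-> forall x y z, AN3_defect x y z = 0.
Proof. by split=> h x y z; [rewrite /AN3_defect h subrr | apply/subr0_eq/h]. Qed.

Lemma cross_ll_AN2 x y v : cross_ll o l1 o x y v = - AN2_defect x y v.
Proof.
apply: (eq_modulo 2 (al1 y x v)); apply: (eq_modulo 1 (al3 x y v)).
apply: (eq_modulo (-1) (al3 y x v)); apply: (eq_modulo (-1) (al4 y x v)).
by rewrite /cross_ll /defect_ll /AN2_defect /circA ?expand; linear_ring.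
Qed.

Lemma cross_lr_AN3 x y v : cross_lr o l1 r1 o r2 x y v =
  AN3_defect x v y + cross_ll o l1 o x v y - cross_ll o l1 o x y v.
Proof.
apply: (eq_modulo 1 (al1 x v y)); apply: (eq_modulo (-1) (al3 x v y)).
apply: (eq_modulo (-1) (al4 v x y)).
rewrite /cross_lr /cross_ll /defect_lr /defect_ll /AN3_defect /circA ?expand.
by linear_ring.
Qed.

Lemma cross_rr_AN1 x y v :
  cross_rr o l1 r1 o r2 x y v = cross_lr o l1 r1 o r2 x y v - AN1_defect y v x.
Proof.
apply: (eq_modulo (-2) (al4 y v x)); apply: (eq_modulo (-1) (al4 v y x)).
rewrite /cross_rr /cross_lr /defect_rr /defect_lr /AN1_defect /circA ?expand.
by linear_ring.
Qed.

Lemma dual_compatible_Novikov :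
  dual_compatible o l1 r1 o r2 <-> [/\ AN1 s p, AN2 s p & AN3 s p].
Proof.
split=> [[hll hlr hrr] | [/AN1_defect_eq0 an1 /AN2_defect_eq0 an2 /AN3_defect_eq0 an3]].
  have an2 x y z : AN2_defect x y z = 0 by rewrite -[LHS]opprK -cross_ll_AN2 hll oppr0.
  have an3 x y z : AN3_defect x y z = 0.
    by have := cross_lr_AN3 x z y; rewrite !hll hlr addr0 subr0.
  have an1 x y z : AN1_defect x y z = 0.
    have := cross_rr_AN1 z x y; rewrite hrr hlr sub0r => /eqP.
    by rewrite eq_sym oppr_eq0 => /eqP.
  by split; [apply/AN1_defect_eq0 | apply/AN2_defect_eq0 | apply/AN3_defect_eq0].
have hll x y v : cross_ll o l1 o x y v = 0 by rewrite cross_ll_AN2 an2 oppr0.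
have hlr x y v : cross_lr o l1 r1 o r2 x y v = 0.
  by rewrite cross_lr_AN3 an3 !hll subr0 addr0.
by split=> // x y v; rewrite cross_rr_AN1 hlr an1 subr0.
Qed.

End AntiPreLeibniz.

Theorem proposition3p8 (K : fieldType) (hK : [pchar K] =i pred0)
  (A : vectType K) (succ prec : A -> A -> A)
  (hA : anti_pre_Leibniz succ prec) :
  dbl_compatible_Leibniz (circ1 succ prec) (circ2 succ prec) <->
  admissible_Novikov_dialgebra succ prec.
Proof.
have [hs [hp [al1 al2 al3 al4]]] := hA.
have hm := leibniz_circA hs hp al1 al2 al3 al4.
apply: (iff_trans (dbl_compatible_agree (circ1E succ prec) (circ2E succ prec)
  (dbl_closed_circ1 hs hp) (dbl_closed_circ2 hs hp))).
apply: (iff_trans (dual_semidirect_compatible hm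
  (anti_pre_Leibniz_dual_representation hs hp al2 al3 al4)
  (coregular_representation (bilinear_circA hs hp) hm))).
apply: (iff_trans (dual_compatible_Novikov hs hp al1 al3 al4)).
split=> [[an1 an2 an3] | [_ [_ [_ [an1 an2 an3]]]]] //.
Qed.
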